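(* For every real number $x$, \[ |\cos x|\le \frac{2}{3}+\frac{7}{18}\cos 2x-\frac{1}{18}\cos 4x. \] *)

From Stdlib Require Import Reals.

From Stdlib Require Import Reals Lra.
Open Scope R_scope.

(* In terms of s = |cos x| the right-hand side is (2 + 11 s^2 - 4 s^4) / 9, and
   (2 + 11 s^2 - 4 s^4) - 9 s = (2 s - 1)^2 (1 - s) (s + 2), which is
   nonnegative on [0, 1]; equality holds at s = 1/2 and s = 1. *)

Lemma cos_4x_cos_2x_combination x :
  2 / 3 + 7 / 18 * cos (2 * x) - 1 / 18 * cos (4 * x)
  = (2 + 11 * cos x ^ 2 - 4 * cos x ^ 4) / 9.
Proof.
  replace (4 * x) with (2 * (2 * x)) by ring.
  rewrite 2!cos_2a_cos, cos_2a_cos.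
  field.
Qed.

Lemma quartic_ge_id_unit_interval s :
  0 <= s <= 1 -> s <= (2 + 11 * s ^ 2 - 4 * s ^ 4) / 9.
Proof.
  intros [s_ge0 s_le1].
  assert (factor : 2 + 11 * s ^ 2 - 4 * s ^ 4 - 9 * s
                   = (2 * s - 1) ^ 2 * ((1 - s) * (s + 2))) by ring.
  assert (0 <= (2 * s - 1) ^ 2 * ((1 - s) * (s + 2))).
  { apply Rmult_le_pos; [apply pow2_ge_0 | apply Rmult_le_pos; lra]. }
  lra.
Qed.

Theorem lemma2p1 : forall x : R,
  Rabs (cos x) <= 2 / 3 + 7 / 18 * cos (2 * x) - 1 / 18 * cos (4 * x).
Proof.
  intro x.
  rewrite cos_4x_cos_2x_combination.
  replace (cos x ^ 4) with ((cos x ^ 2) ^ 2) by ring.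
  rewrite <- pow2_abs.
  replace ((Rabs (cos x) ^ 2) ^ 2) with (Rabs (cos x) ^ 4) by ring.
  apply quartic_ge_id_unit_interval.
  split; [apply Rabs_pos | apply Rabs_le, COS_bound].
Qed.
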